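(* Let $\Lambda=\lambda+\ell\Lambda_0+z\delta$ be a dominant weight (with $\lambda$ a dominant integral weight of the finite root system, $\ell\in\mathbb{N}$ its level, $z\in\mathbb{Z}$), let $x,y\in V_0$ and $u\in W_0$. Then $$\mathcal{L}_\Lambda(t_{x+y}u)=\mathcal{L}_\Lambda(t_xu)+\mathcal{L}_\Lambda(t_yu)+\mathcal{D}_\Lambda(u,x,y),\qquad \mathcal{D}_\Lambda(u,x,y)=h\ell\,(x|y)-\mathcal{L}_\lambda(u).$$ In particular, for every $0\le i\le n$, $$\mathcal{L}_{\Lambda_i}(t_xt_y)=\mathcal{L}_{\Lambda_i}(t_x)+\mathcal{L}_{\Lambda_i}(t_y)+h\frac{a_i^\vee}{a_0^\vee}(x|y).$$
   Context: Let $A=(a_{ij})_{0\le i,j\le n}$ be a generalized Cartan matrix of affine type with realization $\Delta=\{\alpha_0,\dots,\alpha_n\}\subset\mathfrak h^*$, $\Delta^\vee=\{\alpha_0^\vee,\dots,\alpha_n^\vee\}\subset\mathfrak h$, $\dim\mathfrak h=n+2$, $\langle\alpha_j,\alpha_i^\vee\rangle=a_{ij}$. Let $(a_0,\dots,a_n)$, $(a_0^\vee,\dots,a_n^\vee)$ be the primitive positive integer vectors in the kernels of $A$ and $A^T$; $h=\sum a_i$, $\delta=\sum a_i\alpha_i$, $c=\sum a_i^\vee\alpha_i^\vee$. $V_0=\bigoplus_{i=1}^n\mathbb{R}\alpha_i$ with the standard invariant symmetric form $(\cdot|\cdot)$ (with $(\alpha_i|\alpha_j)=a_i^\vee a_i^{-1}a_{ij}$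 for $i,j\ge1$, $(\delta|\cdot)$ vanishing on $V_0$ and $\delta$). $W_0=\langle s_1,\dots,s_n\rangle$ with $s_i(x)=x-\langle x,\alpha_i^\vee\rangle\alpha_i$. $\omega_i\in V_0$ are the finite fundamental weights, $\Lambda_i$ the affine fundamental weights ($\langle\Lambda_i,\alpha_j^\vee\rangle=\delta_{ij}$) with $\Lambda_i=\frac{a_i^\vee}{a_0^\vee}\Lambda_0+\omega_i$; $\rho^\vee\in\mathfrak h$ satisfies $\langle\alpha_i,\rho^\vee\rangle=1$ for all $i$. For $x\in V_0$, $t_x\in GL(\mathfrak h^* )$ is $t_x(v)=v+\langle v,c\rangle x-((v|x)+\frac12|x|^2\langle v,c\rangle)\delta$. For any $g\in GL(\mathfrak h^* )$ and weight $\mu$, $\mathcal{L}_\mu(g)=\langle\mu-g\mu,\rho^\vee\rangle$; in particular $\mathcal{L}_\lambda(u)=\langle\lambda-u\lambda,\rho^\vee\rangle$ for $u\in W_0$. The level of $\Lambda$ is $\ell=\langle\Lambda,c\rangle$. *)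

(* Affine root system data in coordinates:
   h^* and h are both modelled as 'rV[R]_(n.+2) (dim h = n+2),
   with the pairing <v, w> = sum_k v_k w_k.  Simple roots are indexed by
   'I_n.+1 (index 0 = alpha_0); elements of V_0 are given by their
   coefficient vectors x : 'rV[R]_n on alpha_1..alpha_n (j : 'I_n <-> alpha_{j+1}). *)
From HB Require Import structures.
From mathcomp Require Import all_boot all_order all_algebra.
Set Implicit Arguments.
Unset Strict Implicit.
Unset Printing Implicit Defensive.
Import Order.TTheory GRing.Theory Num.Theory.
Local Open Scope ring_scope.

Section Affine.
Variable R : realFieldType.
Variable n : nat.

Notation hs := 'rV[R]_(n.+2).

Definition pair (v w : hs) : R := \sum_(k < n.+2) v 0 k * w 0 k.

Definition is_GCM (A : 'M[int]_(n.+1)) : Prop :=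
  (forall i, A i i = 2%:Z) /\
  (forall i j, i != j -> A i j <= 0) /\
  (forall i j, (A i j == 0) = (A j i == 0)).

Definition indecomposable (A : 'M[int]_(n.+1)) : Prop :=
  forall S : {set 'I_n.+1}, S != set0 -> S != setT ->
    exists i j, [/\ i \in S, j \notin S & A i j != 0].

Variables (A : 'M[int]_(n.+1)) (alpha alphav : 'I_n.+1 -> hs)
          (a av : 'I_n.+1 -> nat) (rhov : hs).

Definition emb (x : 'rV[R]_n) : hs := \sum_(j < n) x 0 j *: alpha (lift ord0 j).

Definition deltaW : hs := \sum_(i < n.+1) (a i)%:R *: alpha i.
Definition cW : hs := \sum_(i < n.+1) (av i)%:R *: alphav i.
Definition hcox : R := (\sum_(i < n.+1) a i)%:R.

(* (alpha_i | alpha_j) = a_i^v a_i^-1 a_ij on V_0 *)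
Definition form0 (x y : 'rV[R]_n) : R :=
  \sum_(i < n) \sum_(j < n) x 0 i * y 0 j *
     ((av (lift ord0 i))%:R / (a (lift ord0 i))%:R * (A (lift ord0 i) (lift ord0 j))%:~R).

Definition normsq (x : 'rV[R]_n) : R := form0 x x.

(* the normalized invariant form (v | x) for v in h^*, x in V_0:
   (v | alpha_j) = a_j^v a_j^-1 <v, alpha_j^v>   (Kac, (6.1), via nu) *)
Definition ipV (v : hs) (x : 'rV[R]_n) : R :=
  \sum_(j < n) x 0 j * ((av (lift ord0 j))%:R / (a (lift ord0 j))%:R
                         * pair v (alphav (lift ord0 j))).

Definition tr (x : 'rV[R]_n) (v : hs) : hs :=
  v + pair v cW *: emb x - (ipV v x + 2^-1 * normsq x * pair v cW) *: deltaW.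

Definition refl (j : 'I_n) (v : hs) : hs :=
  v - pair v (alphav (lift ord0 j)) *: alpha (lift ord0 j).

Definition word (s : seq 'I_n) : hs -> hs :=
  foldr (fun j f => refl j \o f) id s.

Definition Lf (mu : hs) (g : hs -> hs) : R := pair (mu - g mu) rhov.

Definition LamI (Lam0 : hs) (omega : 'I_n -> 'rV[R]_n) (i : 'I_n.+1) : hs :=
  ((av i)%:R / (av ord0)%:R) *: Lam0 +
  (match unlift ord0 i with Some j => emb (omega j) | None => 0 end).

End Affine.

From HB Require Import structures.
From mathcomp Require Import all_boot all_order all_algebra.
From mathcomp Require Import ring.
Import Order.TTheory GRing.Theory Num.Theory.
Local Open Scope ring_scope.

(* Since v - t_x v = - <v,c> x + ((v|x) + |x|^2 <v,c> / 2) delta, and rho^v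
   measures x by its height ht x and delta by h, one has
     L_mu(t_x g) = L_mu(g) - <g mu, c> ht x + h ((g mu|x) + |x|^2 <g mu, c> / 2).
   Both W_0 and the translations preserve the level <., c>, the height and
   (g mu|.) are linear in x, so the failure of additivity in x comes only from
   the quadratic term h ell |x|^2 / 2, i.e. it is h ell (x|y).  For t_x t_y the
   linear term changes by (t_y mu|x) - (mu|x) = <mu,c> (x|y), and the level of
   Lambda_i is a_i^v.  Elements of W_0 fix Lambda_0 and delta, so L_Lambda(u) only
   sees the finite part lambda of Lambda. *)

Section Pairing.
Variables (R : realFieldType) (n : nat).
Implicit Types (v w u : 'rV[R]_(n.+2)).

Lemma pairC v w : pair v w = pair w v.
Proof. by apply: eq_bigr => k _; rewrite mulrC. Qed.

Lemma pairDl v w u : pair (v + w) u = pair v u + pair w u.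
Proof. by rewrite /pair -big_split; apply: eq_bigr => k _; rewrite mxE mulrDl. Qed.

Lemma pairZl k v u : pair (k *: v) u = k * pair v u.
Proof. by rewrite /pair mulr_sumr; apply: eq_bigr => i _; rewrite mxE mulrA. Qed.

Lemma pairBl v w u : pair (v - w) u = pair v u - pair w u.
Proof. by rewrite -scaleN1r pairDl pairZl mulN1r. Qed.

Lemma pair0l u : pair 0 u = 0.
Proof. by rewrite -(scale0r 0) pairZl mul0r. Qed.

Lemma pair_suml m (F : 'I_m -> 'rV[R]_(n.+2)) u :
  pair (\sum_(i < m) F i) u = \sum_(i < m) pair (F i) u.
Proof. by elim/big_rec2: _ => [|i _ w _ <-]; rewrite ?pair0l ?pairDl. Qed.

Lemma pairZr k v u : pair u (k *: v) = k * pair u v.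
Proof. by rewrite pairC pairZl pairC. Qed.

Lemma pair_sumr m (F : 'I_m -> 'rV[R]_(n.+2)) u :
  pair u (\sum_(i < m) F i) = \sum_(i < m) pair u (F i).
Proof. by rewrite pairC pair_suml; apply: eq_bigr => i _; apply: pairC. Qed.

End Pairing.

Section AffineRealization.
Context {R : realFieldType} {n : nat}.
Context {A : 'M[int]_(n.+1)} {alpha alphav : 'I_n.+1 -> 'rV[R]_(n.+2)}
        {a av : 'I_n.+1 -> nat} {rhov Lam0 : 'rV[R]_(n.+2)}.
Implicit Types (x y : 'rV[R]_n) (v w : 'rV[R]_(n.+2)).

Hypothesis ker_A : forall i, \sum_(j < n.+1) A i j * (a j)%:Z = 0.
Hypothesis ker_AT : forall j, \sum_(i < n.+1) (av i)%:Z * A i j = 0.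
Hypothesis form_sym : forall i j, (av i)%:R / (a i)%:R * (A i j)%:~R
                                = (av j)%:R / (a j)%:R * (A j i)%:~R :> R.
Hypothesis pair_alpha : forall i j, pair (alpha j) (alphav i) = (A i j)%:~R.
Hypothesis pair_alpha_rhov : forall i, pair (alpha i) rhov = 1.
Hypothesis pair_Lam0 : forall j, pair Lam0 (alphav j) = (j == ord0)%:R.

Notation c := (cW alphav av).
Notation delta := (deltaW alpha a).
Notation emb := (emb alpha).
Notation ip := (ipV alphav a av).
Notation form := (form0 A a av).
Notation normsq := (normsq A a av).
Notation h := (hcox R a).
Notation tr := (tr A alpha alphav a av).
Notation word := (word alpha alphav).

Lemma pair_alpha_c k : pair (alpha k) c = 0.
Proof.
rewrite pair_sumr -[RHS]/((0 : int)%:~R) -(ker_AT k) rmorph_sum.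
by apply: eq_bigr => i _; rewrite pairZr pair_alpha rmorphM.
Qed.

Lemma pair_emb_c x : pair (emb x) c = 0.
Proof. by rewrite pair_suml big1 // => j _; rewrite pairZl pair_alpha_c mulr0. Qed.

Lemma pair_delta_c : pair delta c = 0.
Proof. by rewrite pair_suml big1 // => j _; rewrite pairZl pair_alpha_c mulr0. Qed.

Lemma pair_delta_alphav k : pair delta (alphav k) = 0.
Proof.
rewrite pair_suml -[RHS]/((0 : int)%:~R) -(ker_A k) rmorph_sum.
by apply: eq_bigr => i _; rewrite pairZl pair_alpha rmorphM mulrC.
Qed.

Lemma pair_emb_rhov x : pair (emb x) rhov = \sum_(j < n) x 0 j.
Proof. by rewrite pair_suml; apply: eq_bigr => j _; rewrite pairZl pair_alpha_rhov mulr1. Qed.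

Lemma pair_delta_rhov : pair delta rhov = h.
Proof.
rewrite pair_suml /hcox natr_sum.
by apply: eq_bigr => j _; rewrite pairZl pair_alpha_rhov mulr1.
Qed.

Lemma pair_Lam0_c : pair Lam0 c = (av ord0)%:R.
Proof.
rewrite pair_sumr (bigD1 ord0) //= big1 ?addr0; first by rewrite pairZr pair_Lam0 mulr1.
by move=> j /negbTE j0; rewrite pairZr pair_Lam0 j0 mulr0.
Qed.

Lemma pair_LamI_c omega i : (0 < av ord0)%N ->
  pair (LamI alpha av Lam0 omega i) c = (av i)%:R.
Proof.
move=> av0_gt0; rewrite /LamI pairDl pairZl pair_Lam0_c divfK ?pnatr_eq0 -?lt0n //.
by case: (unlift ord0 i) => [j|]; rewrite ?pair_emb_c ?pair0l addr0.
Qed.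

Lemma ipVDl v w x : ip (v + w) x = ip v x + ip w x.
Proof. by rewrite /ipV -big_split /=; apply: eq_bigr => j _; rewrite pairDl; ring. Qed.

Lemma ipVZl k v x : ip (k *: v) x = k * ip v x.
Proof. by rewrite /ipV mulr_sumr; apply: eq_bigr => j _; rewrite pairZl; ring. Qed.

Lemma ipVBl v w x : ip (v - w) x = ip v x - ip w x.
Proof. by rewrite -scaleN1r ipVDl ipVZl mulN1r. Qed.

Lemma ipVDr v x y : ip v (x + y) = ip v x + ip v y.
Proof. by rewrite /ipV -big_split; apply: eq_bigr => j _; rewrite mxE mulrDl. Qed.

Lemma ipV_delta x : ip delta x = 0.
Proof. by rewrite /ipV big1 // => j _; rewrite pair_delta_alphav !mulr0. Qed.

Lemma ipV_emb x y : ip (emb y) x = form x y.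
Proof.
rewrite /ipV /form0; apply: eq_bigr => i _.
rewrite pair_suml !mulr_sumr; apply: eq_bigr => j _.
by rewrite pairZl pair_alpha; ring.
Qed.

Lemma form0C x y : form x y = form y x.
Proof.
rewrite /form0 exchange_big; apply: eq_bigr => i _; apply: eq_bigr => j _.
by rewrite form_sym; ring.
Qed.

Lemma form0Dl x y z : form (x + y) z = form x z + form y z.
Proof.
rewrite /form0 -big_split; apply: eq_bigr => i _.
by rewrite -big_split /=; apply: eq_bigr => j _; rewrite mxE; ring.
Qed.

Lemma normsqD x y : normsq (x + y) = normsq x + normsq y + 2 * form x y.
Proof. by rewrite /normsq !(form0Dl, form0C _ (x + y)) (form0C y x); ring. Qed.

Lemma pair_tr_c x v : pair (tr x v) c = pair v c.
Proof. by rewrite /tr pairBl pairDl !pairZl pair_emb_c pair_delta_c !mulr0 subr0 addr0. Qed.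

Lemma ipV_tr v x y : ip (tr y v) x = ip v x + pair v c * form x y.
Proof. by rewrite /tr ipVBl ipVDl !ipVZl ipV_delta ipV_emb mulr0 subr0. Qed.

Lemma pair_word_c s v : pair (word s v) c = pair v c.
Proof.
elim: s => //= j s <-.
by rewrite /refl pairBl pairZl pair_alpha_c mulr0 subr0.
Qed.

Lemma word_addr s v w : (forall j : 'I_n, pair w (alphav (lift ord0 j)) = 0) ->
  word s (v + w) = word s v + w.
Proof.
move=> w_perp; elim: s => //= j s ->.
by rewrite /refl pairDl w_perp addr0 addrAC.
Qed.

Lemma Lf_word_addr mu w s : (forall j : 'I_n, pair w (alphav (lift ord0 j)) = 0) ->
  Lf rhov (mu + w) (word s) = Lf rhov mu (word s).
Proof. by move=> w_perp; rewrite /Lf (word_addr s mu w w_perp) [word s mu + w]addrC addrKA. Qed.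

Lemma Lf_word_finite_part lam k m s :
  Lf rhov (emb lam + k *: Lam0 + m *: delta) (word s) = Lf rhov (emb lam) (word s).
Proof.
rewrite -addrA Lf_word_addr // => j.
rewrite pairDl !pairZl pair_Lam0 pair_delta_alphav eq_sym (negbTE (neq_lift _ _)).
by rewrite mulr0n !mulr0 addr0.
Qed.

Lemma Lf_tr_comp mu g x : Lf rhov mu (tr x \o g) = Lf rhov mu g
  - pair (g mu) c * (\sum_(j < n) x 0 j)
  + (ip (g mu) x + 2^-1 * normsq x * pair (g mu) c) * h.
Proof. by rewrite /Lf /= /tr !pairBl pairDl !pairZl pair_emb_rhov pair_delta_rhov; ring. Qed.

Lemma Lf_trD_comp mu g x y : pair (g mu) c = pair mu c ->
  Lf rhov mu (tr (x + y) \o g)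
  = Lf rhov mu (tr x \o g) + Lf rhov mu (tr y \o g)
    + (h * pair mu c * form x y - Lf rhov mu g).
Proof.
move=> g_level; rewrite !Lf_tr_comp g_level ipVDr normsqD.
under eq_bigr do rewrite mxE; rewrite big_split /=.
have two_neq0 : (2 : R) != 0 by rewrite pnatr_eq0.
by field.
Qed.

Lemma Lf_tr_tr mu x y : Lf rhov mu (tr x \o tr y)
  = Lf rhov mu (tr x) + Lf rhov mu (tr y) + h * pair mu c * form x y.
Proof.
have Lf_id : Lf rhov mu id = 0 by rewrite /Lf subrr pair0l.
rewrite -[Lf rhov mu (tr x)]/(Lf rhov mu (tr x \o id)) !Lf_tr_comp Lf_id /=.
by rewrite pair_tr_c ipV_tr; ring.
Qed.

End AffineRealization.

Theorem theorem2p4 (R : realFieldType) (n : nat)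
  (A : 'M[int]_(n.+1)) (alpha alphav : 'I_n.+1 -> 'rV[R]_(n.+2))
  (a av : 'I_n.+1 -> nat) (rhov Lam0 : 'rV[R]_(n.+2))
  (omega : 'I_n -> 'rV[R]_n) :
  (* A is a generalized Cartan matrix of affine type *)
  is_GCM A -> indecomposable A ->
  (* (a_i), (a_i^v): primitive positive integer vectors in ker A, ker A^T *)
  (forall i, (0 < a i)%N) -> (forall i, \sum_(j < n.+1) A i j * (a j)%:Z = 0) ->
  \big[gcdn/0%N]_(i < n.+1) a i = 1%N ->
  (forall i, (0 < av i)%N) -> (forall j, \sum_(i < n.+1) (av i)%:Z * A i j = 0) ->
  \big[gcdn/0%N]_(i < n.+1) av i = 1%N ->
  (* Kac's labelling of the nodes: a_0^v = 1 *)
  av ord0 = 1%N ->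
  (* the standard invariant form is symmetric *)
  (forall i j, (av i)%:R / (a i)%:R * (A i j)%:~R
               = (av j)%:R / (a j)%:R * (A j i)%:~R :> R) ->
  (* realization *)
  row_free (\matrix_(i < n.+1, k < n.+2) alpha i 0 k) ->
  row_free (\matrix_(i < n.+1, k < n.+2) alphav i 0 k) ->
  (forall i j, pair (alpha j) (alphav i) = (A i j)%:~R) ->
  (* rho^v *)
  (forall i, pair (alpha i) rhov = 1) ->
  (* Lambda_0 and finite fundamental weights omega_1..omega_n in V_0 *)
  (forall j, pair Lam0 (alphav j) = (j == ord0)%:R) ->
  (forall i j : 'I_n, pair (emb alpha (omega i)) (alphav (lift ord0 j)) = (i == j)%:R) ->
  (forall (lam : 'rV[R]_n) (ell : nat) (z : int) (x y : 'rV[R]_n) (s : seq 'I_n),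
     let Lam := emb alpha lam + ell%:R *: Lam0 + z%:~R *: deltaW alpha a in
     let u := word alpha alphav s in
     (* lambda dominant integral for the finite root system *)
     (forall i : 'I_n, exists m : nat, pair (emb alpha lam) (alphav (lift ord0 i)) = m%:R) ->
     (* Lambda dominant of level ell *)
     (forall j, exists m : nat, pair Lam (alphav j) = m%:R) ->
     pair Lam (cW alphav av) = ell%:R ->
     Lf rhov Lam (tr A alpha alphav a av (x + y) \o u)
     = Lf rhov Lam (tr A alpha alphav a av x \o u)
       + Lf rhov Lam (tr A alpha alphav a av y \o u)
       + (hcox R a * ell%:R * form0 A a av x y - Lf rhov (emb alpha lam) u))
  /\
  (forall (i : 'I_n.+1) (x y : 'rV[R]_n),
     let Li := LamI alpha av Lam0 omega i in
     Lf rhov Li (tr A alpha alphav a av x \o tr A alpha alphav a av y)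
     = Lf rhov Li (tr A alpha alphav a av x) + Lf rhov Li (tr A alpha alphav a av y)
       + hcox R a * ((av i)%:R / (av ord0)%:R) * form0 A a av x y).
Proof.
move=> _ _ _ ker_A _ av_pos ker_AT _ av0 form_sym _ _ pair_alpha pair_alpha_rhov pair_Lam0 _.
split=> [lam ell z x y s Lam u _ _ Lam_level | i x y Li].
- rewrite (Lf_trD_comp form_sym pair_alpha_rhov) ?(pair_word_c ker_AT pair_alpha) // Lam_level.
  by rewrite (Lf_word_finite_part ker_A pair_alpha pair_Lam0).
- rewrite (Lf_tr_tr ker_A ker_AT pair_alpha pair_alpha_rhov).
  by rewrite (pair_LamI_c ker_AT pair_alpha pair_Lam0) ?av_pos // av0 divr1.
Qed.
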